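(* Under the hypotheses that $(\mathcal G_A,p^A)$ and $(\mathcal G_B,p^B)$ are CPS's on the finite set $\Omega$ (satisfying the standing assumptions), each satisfying certainty reflection and being $1$-closed, and for any fixed event $E$ and $q_A,q_B\in[0,1]$: if $\omega\in C^\infty$, then $m(\omega)\subseteq C^\infty$.
   Context: $\Omega$ is a finite set; every subset is an event. A CPS is a pair $(\mathcal G,p)$ where $\mathcal G$ is a family of nonempty subsets of $\Omega$ and $p$ assigns to each $G\in\mathcal G$ a probability measure $p_G$ on $\Omega$ with $p_G(G)=1$ and $p_G(E)=p_G(F)p_F(E)$ whenever $E\subseteq F\subseteq G$, $F,G\in\mathcal G$. Standing assumption: each conditioning family is closed under unions and nonempty intersections and covers $\Omega$. Atom: $m_i(\omega)=\bigcap\{G\in\mathcal G_i:\omega\in G\}$; $m(\omega)=\bigcap\{G\in\mathcal G_A\cap\mathcal G_B:\omega\in G\}$. $(\mathcal G_i,p^i)$ is $1$-closed if every $L\subseteq G$ with $G\in\mathcal G_i$ and $p^i_G(L)=1$ belongs to $\mathcal G_i$. Certainty reflection: for every event $E$, $q\in[0,1]$, $\omega$: $p^i_{m_i(\omega)}(E)=q$ implies $p^i_{m_i(\omega)}(\{\omega':p^i_{m_i(\omega')}(E)=q\})=1$. $C_i(F)=\{\omega:p^i_{m_i(\omega)}(F)=1\}$. $A^0=\{\omega:p^A_{m_A(\omega)}(E)=q_A\}$, $B^0=\{\omega:p^B_{m_B(\omega)}(E)=q_B\}$, $A^{n+1}=A^n\cap C_A(B^n)$, $B^{n+1}=B^n\cap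 C_B(A^n)$, $C^\infty=\bigcap_{n\ge0}A^n\cap\bigcap_{n\ge0}B^n$. *)

(* Omega is a finite type T; events are {set T};
   probabilities take values in an arbitrary real field R. *)
From mathcomp Require Import all_boot all_order all_algebra.
Set Implicit Arguments. Unset Strict Implicit. Unset Printing Implicit Defensive.
Import Order.TTheory GRing.Theory Num.Theory.
Local Open Scope ring_scope.

Section CPS.
Variables (T : finType) (R : realFieldType).

(* A conditional system is given by a family Gs of conditioning events and,
   for each G, a point-mass function P G : T -> R; p_G(E) = prob P G E. *)
Definition prob (P : {set T} -> T -> R) (G E : {set T}) : R :=
  \sum_(x in E) P G x.

Definition is_CPS (Gs : {set {set T}}) (P : {set T} -> T -> R) : Prop :=
  (forall G, G \in Gs -> G != set0) /\
  (forall G, G \in Gs ->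
     (forall x, 0 <= P G x) /\ \sum_x P G x = 1 /\ prob P G G = 1) /\
  (forall E F G : {set T}, F \in Gs -> G \in Gs -> E \subset F -> F \subset G ->
     prob P G E = prob P G F * prob P F E).

Definition standing (Gs : {set {set T}}) : Prop :=
  (forall G1 G2, G1 \in Gs -> G2 \in Gs -> G1 :|: G2 \in Gs) /\
  (forall G1 G2, G1 \in Gs -> G2 \in Gs -> G1 :&: G2 != set0 ->
     G1 :&: G2 \in Gs) /\
  (forall w : T, exists2 G, G \in Gs & w \in G).

Definition atom (Gs : {set {set T}}) (w : T) : {set T} :=
  \bigcap_(G in Gs | w \in G) G.

Definition one_closed (Gs : {set {set T}}) (P : {set T} -> T -> R) : Prop :=
  forall G L : {set T}, G \in Gs -> L \subset G -> prob P G L = 1 -> L \in Gs.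

Definition certainty_reflection (Gs : {set {set T}}) (P : {set T} -> T -> R)
  : Prop :=
  forall (E : {set T}) (q : R) (w : T), 0 <= q <= 1 ->
    prob P (atom Gs w) E = q ->
    prob P (atom Gs w) [set w' | prob P (atom Gs w') E == q] = 1.

Definition certain (Gs : {set {set T}}) (P : {set T} -> T -> R) (F : {set T})
  : {set T} := [set w | prob P (atom Gs w) F == 1].

Fixpoint ABseq (GA GB : {set {set T}}) (PA PB : {set T} -> T -> R)
    (E : {set T}) (qA qB : R) (n : nat) : {set T} * {set T} :=
  match n with
  | 0 => ([set w | prob PA (atom GA w) E == qA],
          [set w | prob PB (atom GB w) E == qB])
  | n'.+1 =>
      let ab := ABseq GA GB PA PB E qA qB n' in
      (ab.1 :&: certain GA PA ab.2, ab.2 :&: certain GB PB ab.1)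
  end.

Definition in_Cinf (GA GB : {set {set T}}) (PA PB : {set T} -> T -> R)
    (E : {set T}) (qA qB : R) (w : T) : Prop :=
  forall n, w \in (ABseq GA GB PA PB E qA qB n).1 /\
            w \in (ABseq GA GB PA PB E qA qB n).2.

End CPS.

(** Certainty reflection makes every [A^n] self-evident to agent [A]: a state
    of [A^n] is [A]-certain of [A^n]; a state of [A^(n+1)] is moreover
    [A]-certain of [B^n].  So for [x] in [C^oo] the measure [p^A_(m_A(x))] is
    supported inside [C^oo], and symmetrically for [B].  Hence the set [K] of
    states reachable from [w] by positive-probability steps of either agent
    lies in [C^oo].  Every state of [K] is certain of [K], so by 1-closedness
    and closure under unions [K] is a conditioning event of both agents, and
    the common atom [m(w)] is contained in it. *)
From mathcomp Require Import all_boot all_order all_algebra.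
Set Implicit Arguments. Unset Strict Implicit. Unset Printing Implicit Defensive.
Import Order.TTheory GRing.Theory Num.Theory.
Local Open Scope ring_scope.

Section ProbabilityOne.
Variables (T : finType) (R : realFieldType) (P : {set T} -> T -> R) (G : {set T}).
Hypotheses (P_ge0 : forall x, 0 <= P G x) (P_sum1 : \sum_x P G x = 1).

Lemma prob1P (X : {set T}) :
  prob P G X = 1 <-> (forall x, P G x != 0 -> x \in X).
Proof.
have splitX : \sum_x P G x = prob P G X + \sum_(x | x \notin X) P G x.
  by rewrite (bigID (mem X)).
split=> [probX x | suppX].
- have out0 : \sum_(x | x \notin X) P G x = 0.
    by apply: (addrI (prob P G X)); rewrite -splitX probX P_sum1 addr0.
  by apply: contraR => xX; apply/eqP; exact: (psumr_eq0P (fun i _ => P_ge0 i) out0).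
- have out0 : \sum_(x | x \notin X) P G x = 0.
    by apply: big1 => x; apply: contraNeq; exact: suppX.
  by rewrite -P_sum1 splitX out0 addr0.
Qed.

Lemma prob1I (X Y : {set T}) :
  prob P G X = 1 -> prob P G Y = 1 -> prob P G (X :&: Y) = 1.
Proof.
move=> /prob1P suppX /prob1P suppY; apply/prob1P => x Px.
by rewrite inE suppX ?suppY.
Qed.

End ProbabilityOne.

Section Atoms.
Variables (T : finType) (R : realFieldType).
Variables (Gs : {set {set T}}) (P : {set T} -> T -> R).
Hypotheses (cpsP : is_CPS Gs P) (standingG : standing Gs).

Lemma atom_mem w : w \in atom Gs w.
Proof. by apply/bigcapP => G /andP[]. Qed.

Lemma atom_in w : atom Gs w \in Gs.
Proof.
have [_ [capG]] := standingG; case/(_ w) => G0 G0in wG0.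
(* [setT] is the value of the empty intersection, which cannot occur since
   some [G0 \in Gs] contains [w]. *)
have : (w \in atom Gs w) && ((atom Gs w == setT) || (atom Gs w \in Gs)).
  apply: (big_ind (fun X : {set T} =>
    is_true ((w \in X) && ((X == setT) || (X \in Gs))))).
  - by rewrite in_setT eqxx.
  - move=> X Y /andP[wX XG] /andP[wY YG]; rewrite inE wX wY.
    case/orP: XG => [/eqP->|XG]; first by rewrite setTI YG.
    case/orP: YG => [/eqP->|YG]; first by rewrite setIT XG orbT.
    by rewrite capG ?orbT //; apply/set0Pn; exists w; rewrite inE wX wY.
  - by move=> G /andP[-> ->]; rewrite orbT.
case/andP=> _ /orP[/eqP atomT|//].
have : atom Gs w \subset G0 by apply: bigcap_inf; rewrite G0in wG0.
by rewrite atomT subTset => /eqP <-.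
Qed.

Lemma atom_ge0 w x : 0 <= P (atom Gs w) x.
Proof. by have [_ [/(_ _ (atom_in w)) []]] := cpsP. Qed.

Lemma atom_sum1 w : \sum_x P (atom Gs w) x = 1.
Proof. by have [_ [/(_ _ (atom_in w)) [_ []]]] := cpsP. Qed.

Lemma atom_prob1 w : prob P (atom Gs w) (atom Gs w) = 1.
Proof. by have [_ [/(_ _ (atom_in w)) [_ []]]] := cpsP. Qed.

Lemma bigcup_in_Gs (I : finType) (D : {pred I}) (F : I -> {set T}) :
  (forall i, i \in D -> F i \in Gs) -> \bigcup_(i in D) F i != set0 ->
  \bigcup_(i in D) F i \in Gs.
Proof.
have [cupG _] := standingG; move=> FG; apply/implyP.
apply: (big_ind (fun X : {set T} => is_true ((X != set0) ==> (X \in Gs)))).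
- by rewrite eqxx.
- move=> X Y; case: eqVneq => [-> _|_ /= XG]; first by rewrite set0U.
  case: eqVneq => [-> _|_ /= YG]; first by rewrite setU0 XG implybT.
  by rewrite cupG ?implybT.
- by move=> i /FG ->; rewrite implybT.
Qed.

Lemma support_closed_in_Gs (K : {set T}) :
  one_closed Gs P -> K != set0 ->
  (forall y z, y \in K -> P (atom Gs y) z != 0 -> z \in K) -> K \in Gs.
Proof.
move=> oneG K0 closedK.
have K_cup : \bigcup_(y in K) (atom Gs y :&: K) = K.
  apply/setP=> z; apply/bigcupP/idP => [[y _] /setIP[]//|zK].
  by exists z; rewrite ?inE ?atom_mem.
rewrite -K_cup; apply: bigcup_in_Gs; last by rewrite K_cup.
move=> y yK; apply: (oneG (atom Gs y)); [exact: atom_in | exact: subsetIl |].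
have ge0 := atom_ge0 y; have sum1 := atom_sum1 y.
apply: (prob1I ge0 sum1 (atom_prob1 y)).
by apply/(prob1P ge0 sum1) => z; exact: closedK.
Qed.

End Atoms.

Lemma connect_invariant (T : finType) (e : rel T) (Q : T -> Prop) x y :
  (forall a b, Q a -> e a b -> Q b) -> Q x -> connect e x y -> Q y.
Proof.
move=> stepQ + /connectP[p + ->].
by elim: p x => [|a p IHp] x //= Qx /andP[/(stepQ _ _ Qx) Qa /(IHp _ Qa)].
Qed.

Section Iteration.
Variables (T : finType) (R : realFieldType).
Variables (GA GB : {set {set T}}) (PA PB : {set T} -> T -> R).
Variables (E : {set T}) (qA qB : R).

Lemma ABseq_swap n :
  ABseq GB GA PB PA E qB qA n = ((ABseq GA GB PA PB E qA qB n).2,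
                                 (ABseq GA GB PA PB E qA qB n).1).
Proof. by elim: n => [|n /= ->]. Qed.

Lemma in_Cinf_swap w :
  in_Cinf GA GB PA PB E qA qB w -> in_Cinf GB GA PB PA E qB qA w.
Proof. by move=> Cw n; rewrite ABseq_swap /=; have [] := Cw n. Qed.

Hypotheses (cpsA : is_CPS GA PA) (standingA : standing GA).
Hypotheses (reflA : certainty_reflection GA PA) (qA01 : 0 <= qA <= 1).

Lemma ABseq1_self_evident n x :
  x \in (ABseq GA GB PA PB E qA qB n).1 ->
  prob PA (atom GA x) (ABseq GA GB PA PB E qA qB n).1 = 1.
Proof.
elim: n x => [|n IHn] x /=; first by rewrite inE => /eqP /(reflA qA01).
rewrite inE => /andP[xA]; rewrite inE => /eqP xC.
apply: prob1I; [exact: atom_ge0 | exact: atom_sum1 | exact: IHn |].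
by apply: reflA xC; rewrite ler01 lexx.
Qed.

Lemma in_Cinf_support w z :
  in_Cinf GA GB PA PB E qA qB w -> PA (atom GA w) z != 0 ->
  in_Cinf GA GB PA PB E qA qB z.
Proof.
have [ge0 sum1] := (atom_ge0 cpsA standingA w, atom_sum1 cpsA standingA w).
move=> Cw Pz n; split.
- by case: (Cw n) => /ABseq1_self_evident /(prob1P ge0 sum1) suppA _; exact: suppA.
- have [/= /setIP[_]] := Cw n.+1; rewrite inE => /eqP /(prob1P ge0 sum1).
  by move/(_ z Pz).
Qed.

End Iteration.

Theorem lemma4 (T : finType) (R : realFieldType)
    (GA GB : {set {set T}}) (PA PB : {set T} -> T -> R)
    (E : {set T}) (qA qB : R) :
  is_CPS GA PA -> standing GA -> certainty_reflection GA PA -> one_closed GA PA ->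
  is_CPS GB PB -> standing GB -> certainty_reflection GB PB -> one_closed GB PB ->
  0 <= qA <= 1 -> 0 <= qB <= 1 ->
  forall w : T, in_Cinf GA GB PA PB E qA qB w ->
  forall w', w' \in atom (GA :&: GB) w -> in_Cinf GA GB PA PB E qA qB w'.
Proof.
move=> cpsA stA reflA oneA cpsB stB reflB oneB qA01 qB01 w Cw w' w'm.
pose e := [rel y z | (PA (atom GA y) z != 0) || (PB (atom GB y) z != 0)].
pose K := [set z | connect e w z].
have K0 : K != set0 by apply/set0Pn; exists w; rewrite inE connect0.
have closedK y z : y \in K -> e y z -> z \in K.
  by move=> + yz; rewrite !inE => wy; exact: connect_trans wy (@connect1 _ e _ _ yz).
have KA : K \in GA.
  apply: (support_closed_in_Gs cpsA stA oneA K0) => y z yK Pz.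
  by apply: closedK yK _; rewrite /= Pz.
have KB : K \in GB.
  apply: (support_closed_in_Gs cpsB stB oneB K0) => y z yK Pz.
  by apply: closedK yK _; rewrite /= Pz orbT.
have mK : atom (GA :&: GB) w \subset K.
  by apply: bigcap_inf; rewrite inE KA KB inE connect0.
have := subsetP mK _ w'm; rewrite inE; apply: connect_invariant Cw => y z Cy /orP[].
- exact: in_Cinf_support.
- by move=> Pz; apply/in_Cinf_swap/(in_Cinf_support cpsB stB reflB qB01 _ Pz)/in_Cinf_swap.
Qed.
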